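(* Let $g:[0,1]\to\mathbb{R}$ be continuous with $g(0)=g(1)=0$ and $g(y)>0$ for all $y\in(0,1)$, and let $S$ be the solid obtained by rotating about the $y$-axis the region bounded by the $y$-axis and the curve $x^2=g(y)$, $y\in[0,1]$. Let $$\rho=\frac{\int_0^1 g(1-s^2)\,ds}{\int_0^1 g(s^2)\,ds}$$ be the turn-up number of $S$ with respect to the $y$-axis. Then $\rho=1$ if and only if $$\int_0^{\pi/4}\big[g(\cos^2 t)-g(\sin^2 t)\big]\cos\!\Big(\frac{\pi}{4}+t\Big)\,dt=0.$$
   Context: The turn-up number of a solid with respect to a vertical line is the ratio of the Torricelli drainage times $T=\frac1K\int_0^H A(h)h^{-1/2}\,dh$ (with $A(h)$ the horizontal cross-sectional area at height $h$ and the orifice at the lowest point) for the solid in the two positions obtained by turning it upside down while keeping that line vertical. For the solid $S$ above, with cross-sectional area $\pi g(h)$ at height $h$, these two times are proportional to $\int_0^1 g(s^2)\,ds$ and $\int_0^1 g(1-s^2)\,ds$, giving the displayed formula for $\rho$. *)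

From Stdlib Require Import Reals Lra.
From Coquelicot Require Import Coquelicot.
Open Scope R_scope.

Definition continuous_on_01 (g : R -> R) : Prop :=
  forall y, 0 <= y <= 1 ->
    forall eps, 0 < eps -> exists delta, 0 < delta /\
      forall z, 0 <= z <= 1 -> Rabs (z - y) < delta -> Rabs (g z - g y) < eps.

Definition turn_up_number (g : R -> R) : R :=
  RInt (fun s => g (1 - s ^ 2)) 0 1 / RInt (fun s => g (s ^ 2)) 0 1.

(** Substituting [s = sin y] turns both Torricelli integrals into integrals over
    [[0, pi/2]]: [int_0^1 g(s^2) ds = int cos y g(sin^2 y) dy] and
    [int_0^1 g(1 - s^2) ds = int cos y g(cos^2 y) dy].  Folding their difference
    about [pi/4] by [y |-> pi/2 - y] gives
    [int_0^(pi/4) (cos t - sin t) (g(cos^2 t) - g(sin^2 t)) dt], and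
    [cos t - sin t = sqrt 2 cos (pi/4 + t)].  Since [g > 0] on [(0,1)] the
    denominator of the turn-up number is positive, so [rho = 1] iff this integral
    vanishes.  The boundary values [g 0 = g 1 = 0] play no role. *)

From Stdlib Require Import Reals Lra.
From Coquelicot Require Import Coquelicot.
Open Scope R_scope.

Lemma continuous_on_01_extension (g : R -> R) :
  continuous_on_01 g ->
  exists G, continuity G /\ forall x, 0 <= x <= 1 -> G x = g x.
Proof.
  intros hcont.
  set (clamp x := Rmax 0 (Rmin 1 x)).
  assert (clamp_01 : forall x, 0 <= clamp x <= 1).
  { intros x; unfold clamp, Rmax, Rmin; repeat destruct Rle_dec; lra. }
  assert (clamp_id : forall x, 0 <= x <= 1 -> clamp x = x).
  { intros x; unfold clamp, Rmax, Rmin; repeat destruct Rle_dec; lra. }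
  assert (clamp_lip : forall x z, Rabs (clamp z - clamp x) <= Rabs (z - x)).
  { intros x z; unfold clamp, Rmax, Rmin; repeat destruct Rle_dec; split_Rabs; lra. }
  exists (fun x => g (clamp x)); split.
  - intros x eps Heps.
    destruct (hcont (clamp x) (clamp_01 x) eps Heps) as [delta [Hdelta Hg]].
    exists delta; split; [exact Hdelta |].
    intros z [_ Hz]; simpl in *; unfold R_dist in *.
    apply Hg; [apply clamp_01 |].
    eapply Rle_lt_trans; [apply clamp_lip | exact Hz].
  - intros x Hx; rewrite clamp_id; auto.
Qed.

Lemma RInt_subst_sin (f : R -> R) (a b : R) :
  continuity f ->
  RInt (fun y => cos y * f (sin y)) a b = RInt f (sin a) (sin b).
Proof.
  intros Hf; apply (RInt_comp f sin cos); intros x _.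
  - apply continuity_pt_filterlim, Hf.
  - split; [apply is_derive_sin | apply continuity_pt_filterlim, continuity_cos].
Qed.

Lemma is_RInt_reflect (f : R -> R) (c d s l : R) :
  is_RInt f c d l -> is_RInt (fun x => f (s - x)) (s - d) (s - c) l.
Proof.
  intros Hf.
  assert (Hswap : is_RInt f (-1 * (s - d) + s) (-1 * (s - c) + s) (- l)).
  { replace (-1 * (s - d) + s) with d by ring.
    replace (-1 * (s - c) + s) with c by ring.
    exact (is_RInt_swap f d c l Hf). }
  apply (is_RInt_ext (fun x => - (-1 * f (-1 * x + s)))).
  { intros x _; simpl.
    replace (-1 * x + s) with (s - x) by ring.
    ring. }
  rewrite <- (Ropp_involutive l).
  exact (is_RInt_opp _ _ _ _ (is_RInt_comp_lin f (-1) s _ _ _ Hswap)).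
Qed.

Lemma RInt_fold_midpoint (f : R -> R) (a b : R) :
  a <= b -> ex_RInt f a b ->
  RInt f a b = RInt (fun x => f x + f (a + b - x)) a ((a + b) / 2).
Proof.
  intros Hab Hf.
  set (m := (a + b) / 2).
  assert (Hleft : ex_RInt f a m).
  { apply (@ex_RInt_Chasles_1 R_CompleteNormedModule) with b; [unfold m; lra | exact Hf]. }
  assert (Hright : ex_RInt f m b).
  { apply (@ex_RInt_Chasles_2 R_CompleteNormedModule) with a; [unfold m; lra | exact Hf]. }
  pose proof (is_RInt_reflect f m b (a + b) _ (RInt_correct f m b Hright)) as Hreflect.
  replace (a + b - b) with a in Hreflect by ring.
  replace (a + b - m) with m in Hreflect by (unfold m; field).
  rewrite <- (RInt_Chasles f a m b Hleft Hright).
  symmetry; apply is_RInt_unique.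
  exact (is_RInt_plus _ _ _ _ _ _ (RInt_correct f a m Hleft) Hreflect).
Qed.

Lemma ex_RInt_continuity (f : R -> R) (a b : R) : continuity f -> ex_RInt f a b.
Proof.
  intros Hf; apply (@ex_RInt_continuous R_CompleteNormedModule); intros x _.
  apply continuity_pt_filterlim, Hf.
Qed.

Lemma cos_sin_antisymmetric_sum (u v t : R) :
  cos t * (u - v) + sin t * (v - u) = sqrt 2 * ((u - v) * cos (PI / 4 + t)).
Proof.
  rewrite cos_plus, cos_PI4, sin_PI4.
  assert (sqrt 2 <> 0) by (apply Rgt_not_eq, sqrt_lt_R0; lra).
  field; assumption.
Qed.

Lemma sin_sq_01 (y : R) : 0 <= sin y ^ 2 <= 1.
Proof. pose proof (sin2_cos2 y); unfold Rsqr in *; nra. Qed.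

Lemma cos_sq_01 (y : R) : 0 <= cos y ^ 2 <= 1.
Proof. pose proof (sin2_cos2 y); unfold Rsqr in *; nra. Qed.

Section TurnUp.

Variable g : R -> R.
Hypothesis hcont : continuous_on_01 g.

Lemma continuity_comp_01 (h : R -> R) :
  continuity h -> (forall y, 0 <= h y <= 1) -> continuity (fun y => g (h y)).
Proof.
  intros Hh Hh01 x.
  destruct (continuous_on_01_extension g hcont) as [G [HG HGg]].
  apply (continuity_pt_ext (fun y => G (h y))); [intros y; apply HGg, Hh01 |].
  apply continuity_pt_comp; [apply Hh | apply HG].
Qed.

Lemma continuity_g_sin_sq : continuity (fun y => g (sin y ^ 2)).
Proof.
  apply continuity_comp_01; [| exact sin_sq_01].
  apply (continuity_comp sin (fun x => x ^ 2)); [apply continuity_sin |].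
  apply derivable_continuous, derivable_pow.
Qed.

Lemma continuity_g_cos_sq : continuity (fun y => g (cos y ^ 2)).
Proof.
  apply continuity_comp_01; [| exact cos_sq_01].
  apply (continuity_comp cos (fun x => x ^ 2)); [apply continuity_cos |].
  apply derivable_continuous, derivable_pow.
Qed.

Lemma RInt_01_subst_sin (f : R -> R) :
  continuity f -> (forall s, 0 <= s <= 1 -> 0 <= f s <= 1) ->
  RInt (fun s => g (f s)) 0 1 = RInt (fun y => cos y * g (f (sin y))) 0 (PI / 2).
Proof.
  intros Hf Hf01.
  destruct (continuous_on_01_extension g hcont) as [G [HG HGg]].
  transitivity (RInt (fun s => G (f s)) 0 1).
  { apply RInt_ext; intros s Hs.
    rewrite Rmin_left, Rmax_right in Hs by lra.
    rewrite HGg; auto; apply Hf01; lra. }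
  transitivity (RInt (fun s => G (f s)) (sin 0) (sin (PI / 2))).
  { now rewrite sin_0, sin_PI2. }
  rewrite <- RInt_subst_sin.
  2: { intros x; apply continuity_pt_comp; [apply Hf | apply HG]. }
  apply RInt_ext; intros y Hy.
  rewrite Rmin_left, Rmax_right in Hy by (pose proof PI_RGT_0; lra).
  rewrite HGg; [reflexivity |].
  apply Hf01; split; [apply sin_ge_0 | apply SIN_bound]; pose proof PI_RGT_0; lra.
Qed.

Lemma RInt_g_sq :
  RInt (fun s => g (s ^ 2)) 0 1 = RInt (fun y => cos y * g (sin y ^ 2)) 0 (PI / 2).
Proof.
  apply (RInt_01_subst_sin (fun s => s ^ 2)); [apply derivable_continuous, derivable_pow |].
  intros s Hs; nra.
Qed.

Lemma RInt_g_one_minus_sq :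
  RInt (fun s => g (1 - s ^ 2)) 0 1 = RInt (fun y => cos y * g (cos y ^ 2)) 0 (PI / 2).
Proof.
  rewrite (RInt_01_subst_sin (fun s => 1 - s ^ 2)).
  - apply RInt_ext; intros y _.
    replace (1 - sin y ^ 2) with (cos y ^ 2); [reflexivity |].
    pose proof (sin2_cos2 y); unfold Rsqr in *; nra.
  - reg.
  - intros s Hs; nra.
Qed.

Lemma RInt_cos_mul_g_fold :
  RInt (fun y => cos y * g (cos y ^ 2)) 0 (PI / 2) - RInt (fun y => cos y * g (sin y ^ 2)) 0 (PI / 2)
  = sqrt 2 * RInt (fun t => (g (cos t ^ 2) - g (sin t ^ 2)) * cos (PI / 4 + t)) 0 (PI / 4).
Proof.
  pose (D t := g (cos t ^ 2) - g (sin t ^ 2)).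
  assert (cD : continuity D).
  { apply continuity_minus; [apply continuity_g_cos_sq | apply continuity_g_sin_sq]. }
  assert (continuity_cos_mul : forall h, continuity h -> continuity (fun y => cos y * h y)).
  { intros h Hh; apply (continuity_mult cos h); [apply continuity_cos | exact Hh]. }
  transitivity (RInt (fun y => cos y * D y) 0 (PI / 2)).
  { rewrite <- (@RInt_minus R_CompleteNormedModule).
    2, 3: apply ex_RInt_continuity, continuity_cos_mul; auto using continuity_g_cos_sq, continuity_g_sin_sq.
    apply RInt_ext; intros y _; unfold D, minus, plus, opp; simpl; ring. }
  rewrite RInt_fold_midpoint.
  2: { pose proof PI_RGT_0; lra. }
  2: { apply ex_RInt_continuity, continuity_cos_mul, cD. }
  replace ((0 + PI / 2) / 2) with (PI / 4) by field.
  rewrite <- (@RInt_scal R_CompleteNormedModule).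
  2: { apply ex_RInt_continuity, (continuity_mult D); [exact cD | reg]. }
  apply RInt_ext; intros t _.
  change (scal (sqrt 2) ?x) with (sqrt 2 * x).
  replace (0 + PI / 2 - t) with (PI / 2 - t) by ring.
  unfold D; rewrite cos_shift, sin_shift.
  apply cos_sin_antisymmetric_sum.
Qed.

Hypothesis hpos : forall y, 0 < y < 1 -> 0 < g y.

Lemma RInt_g_sq_pos : 0 < RInt (fun s => g (s ^ 2)) 0 1.
Proof.
  rewrite RInt_g_sq.
  pose proof PI_RGT_0.
  apply RInt_gt_0; [lra | |].
  - intros y Hy.
    assert (Hcos : 0 < cos y) by (apply cos_gt_0; lra).
    assert (Hsin : 0 < sin y) by (apply sin_gt_0; lra).
    pose proof (sin2_cos2 y); unfold Rsqr in *.
    apply Rmult_lt_0_compat; [exact Hcos | apply hpos; nra].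
  - intros y _; apply continuity_pt_filterlim, continuity_mult;
      [apply continuity_cos | apply continuity_g_sin_sq].
Qed.

End TurnUp.

Theorem theorem4 (g : R -> R)
  (hcont : continuous_on_01 g)
  (h0 : g 0 = 0) (h1 : g 1 = 0)
  (hpos : forall y, 0 < y < 1 -> 0 < g y) :
  turn_up_number g = 1 <->
  RInt (fun t => (g (cos t ^ 2) - g (sin t ^ 2)) * cos (PI / 4 + t)) 0 (PI / 4) = 0.
Proof.
  assert (Hsqrt2 : 0 < sqrt 2) by (apply sqrt_lt_R0; lra).
  pose proof (RInt_g_sq_pos g hcont hpos) as Hpos.
  pose proof (RInt_cos_mul_g_fold g hcont) as Hfold.
  rewrite <- RInt_g_sq, <- RInt_g_one_minus_sq in Hfold by exact hcont.
  unfold turn_up_number; split; intros H.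
  - apply Rdiv_diag_uniq in H.
    apply (Rmult_eq_reg_l (sqrt 2)); lra.
  - apply Rdiv_diag_eq; [lra |].
    rewrite H, Rmult_0_r in Hfold; lra.
Qed.
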